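(* Let $n\in\mathbb{N}$ and let $M\models \mathrm{I}\Delta_0$. Suppose $M$ admits a proper $\Sigma_{n+2}$-elementary end extension $K$ with $K\models \mathrm{B}\Sigma_{n+1}$. Then for every $a\in M$ and every $\Pi_{n+1}$-formula $\phi(x,y)$ with parameters from $M$, \[M\models \forall x\,\exists y<a\,\phi(x,y)\;\rightarrow\;\exists y<a\,\forall b\,\exists x>b\,\phi(x,y).\]
   Context: All theories contain $\mathrm{PA}^-$ (the theory of non-negative parts of discretely ordered rings). $\mathrm{I}\Delta_0$ is bounded induction; $\mathrm{B}\Sigma_{k}$ is the $\Sigma_k$-collection scheme $\forall x<a\,\exists y\,\phi(x,y)\to\exists b\,\forall x<a\,\exists y<b\,\phi(x,y)$ for $\Sigma_k$ formulas $\phi$ (with parameters), taken together with $\mathrm{I}\Delta_0$. An extension $M\subseteq K$ of models of first-order arithmetic is $\Sigma_k$-elementary if every $\Sigma_k$ formula with parameters from $M$ has the same truth value in $M$ and $K$; it is an end extension if every element of $K\setminus M$ is greater than every element of $M$; it is proper if $K\neq M$. *)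

Set Implicit Arguments.

Inductive term : Type :=
| tVar : nat -> term
| tZero : term
| tOne : term
| tPlus : term -> term -> term
| tMult : term -> term -> term.

(* BAll t p  is  (forall x < t, p)  and  BEx t p  is  (exists x < t, p);
   the bound variable is de Bruijn index 0 in p, and t is evaluated in the
   outer environment (so x does not occur in t). *)
Inductive formula : Type :=
| fEq : term -> term -> formula
| fLt : term -> term -> formula
| fBot : formula
| fNot : formula -> formula
| fAnd : formula -> formula -> formula
| fOr : formula -> formula -> formula
| fImp : formula -> formula -> formula
| fBAll : term -> formula -> formula
| fBEx : term -> formula -> formula
| fAll : formula -> formula
| fEx : formula -> formula.

Record structure : Type := Structure {
  carrier :> Type;
  zero : carrier;
  one : carrier;
  add : carrier -> carrier -> carrier;
  mul : carrier -> carrier -> carrier;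
  lt : carrier -> carrier -> Prop
}.

Definition scons {A : Type} (x : A) (e : nat -> A) : nat -> A :=
  fun i => match i with 0 => x | S j => e j end.

Fixpoint eval (M : structure) (e : nat -> M) (t : term) : M :=
  match t with
  | tVar i => e i
  | tZero => zero M
  | tOne => one M
  | tPlus u v => add M (eval M e u) (eval M e v)
  | tMult u v => mul M (eval M e u) (eval M e v)
  end.

Fixpoint sat (M : structure) (e : nat -> M) (p : formula) : Prop :=
  match p with
  | fEq u v => eval M e u = eval M e v
  | fLt u v => lt M (eval M e u) (eval M e v)
  | fBot => False
  | fNot q => ~ sat M e q
  | fAnd q r => sat M e q /\ sat M e r
  | fOr q r => sat M e q \/ sat M e r
  | fImp q r => sat M e q -> sat M e r
  | fBAll t q => forall x : M, lt M x (eval M e t) -> sat M (scons x e) q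
  | fBEx t q => exists x : M, lt M x (eval M e t) /\ sat M (scons x e) q
  | fAll q => forall x : M, sat M (scons x e) q
  | fEx q => exists x : M, sat M (scons x e) q
  end.

Fixpoint Delta0 (p : formula) : Prop :=
  match p with
  | fEq _ _ | fLt _ _ | fBot => True
  | fNot q => Delta0 q
  | fAnd q r | fOr q r | fImp q r => Delta0 q /\ Delta0 r
  | fBAll _ q | fBEx _ q => Delta0 q
  | fAll _ | fEx _ => False
  end.

Inductive IsSigma : nat -> formula -> Prop :=
| Sigma0 : forall p, Delta0 p -> IsSigma 0 p
| SigmaS_Pi : forall k p, IsPi k p -> IsSigma (S k) p
| SigmaS_Ex : forall k p, IsSigma (S k) p -> IsSigma (S k) (fEx p)
with IsPi : nat -> formula -> Prop :=
| Pi0 : forall p, Delta0 p -> IsPi 0 p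
| PiS_Sigma : forall k p, IsSigma k p -> IsPi (S k) p
| PiS_All : forall k p, IsPi (S k) p -> IsPi (S k) (fAll p).

Definition PAminus (M : structure) : Prop :=
  let z := zero M in let o := one M in
  let ad := add M in let mu := mul M in let l := lt M in
  (forall x y, ad x y = ad y x) /\
  (forall x y w, ad (ad x y) w = ad x (ad y w)) /\
  (forall x y, mu x y = mu y x) /\
  (forall x y w, mu (mu x y) w = mu x (mu y w)) /\
  (forall x y w, mu x (ad y w) = ad (mu x y) (mu x w)) /\
  (forall x, ad x z = x) /\
  (forall x, mu x z = z) /\
  (forall x, mu x o = x) /\
  (forall x, ~ l x x) /\
  (forall x y w, l x y -> l y w -> l x w) /\
  (forall x y, l x y \/ x = y \/ l y x) /\
  (forall x y w, l x y -> l (ad x w) (ad y w)) /\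
  (forall x y w, l z w -> l x y -> l (mu x w) (mu y w)) /\
  (forall x y, l x y -> exists w, ad x w = y) /\
  l z o /\
  (forall x, l z x -> o = x \/ l o x) /\
  (forall x, z = x \/ l z x).

Definition IDelta0 (M : structure) : Prop :=
  PAminus M /\
  forall (p : formula) (e : nat -> M), Delta0 p ->
    sat M (scons (zero M) e) p ->
    (forall x : M, sat M (scons x e) p -> sat M (scons (add M x (one M)) e) p) ->
    forall x : M, sat M (scons x e) p.

(* Sigma_k collection (with parameters), together with IDelta0.
   phi(x,y): y is de Bruijn index 0, x is index 1. *)
Definition BSigma (k : nat) (M : structure) : Prop :=
  IDelta0 M /\
  forall (p : formula) (e : nat -> M) (a : M), IsSigma k p ->
    (forall x : M, lt M x a -> exists y : M, sat M (scons y (scons x e)) p) ->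
    exists b : M, forall x : M, lt M x a ->
      exists y : M, lt M y b /\ sat M (scons y (scons x e)) p.

Definition is_embedding {M K : structure} (f : M -> K) : Prop :=
  (forall x y, f x = f y -> x = y) /\
  f (zero M) = zero K /\ f (one M) = one K /\
  (forall x y, f (add M x y) = add K (f x) (f y)) /\
  (forall x y, f (mul M x y) = mul K (f x) (f y)) /\
  (forall x y, lt M x y <-> lt K (f x) (f y)).

Definition in_image {M K : structure} (f : M -> K) (y : K) : Prop :=
  exists x : M, f x = y.

Definition end_extension {M K : structure} (f : M -> K) : Prop :=
  forall y : K, ~ in_image f y -> forall x : M, lt K (f x) y.

Definition proper_extension {M K : structure} (f : M -> K) : Prop :=
  exists y : K, ~ in_image f y.

Definition sigma_elementary (k : nat) {M K : structure} (f : M -> K) : Prop :=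
  forall (p : formula) (e : nat -> M), IsSigma k p ->
    (sat M e p <-> sat K (fun i => f (e i)) p).

(* If the conclusion fails, every y < a has a bound b in M beyond which
   ~ phi(x, y) holds.  That is a Pi_{n+2} property of b, so it persists in K and
   makes ~ phi(c, y) true for one c in K \ M and all y < a; all such y lie in M
   since K end-extends M.  In K, BSigma_{n+1} absorbs the bounded quantifier of
   forall y < a, ~ phi(x, y) into a Sigma_{n+1} formula, so
   exists x, forall y < a, ~ phi(x, y) is Sigma_{n+2}; it reflects to M, and
   its witness x contradicts the hypothesis. *)

From Stdlib Require Import Classical FunctionalExtensionality PeanoNat.

Set Implicit Arguments.

Scheme IsSigma_mut := Induction for IsSigma Sort Prop
with IsPi_mut := Induction for IsPi Sort Prop.
Combined Scheme hierarchy_ind from IsSigma_mut, IsPi_mut.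

Lemma hierarchy_succ :
  (forall k p, IsSigma k p -> IsSigma (S k) p) /\
  (forall k p, IsPi k p -> IsPi (S k) p).
Proof.
  apply hierarchy_ind; intros; constructor; solve [auto using Sigma0, Pi0].
Qed.

Lemma IsSigma0_Delta0 p : IsSigma 0 p -> Delta0 p.
Proof. now inversion 1. Qed.

Fixpoint tsubst (s : nat -> term) (t : term) : term :=
  match t with
  | tVar i => s i
  | tZero => tZero
  | tOne => tOne
  | tPlus u v => tPlus (tsubst s u) (tsubst s v)
  | tMult u v => tMult (tsubst s u) (tsubst s v)
  end.

Definition lift (t : term) : term := tsubst (fun i => tVar (S i)) t.

Definition up (s : nat -> term) : nat -> term := scons (tVar 0) (fun i => lift (s i)).

Fixpoint fsubst (s : nat -> term) (p : formula) : formula :=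
  match p with
  | fEq u v => fEq (tsubst s u) (tsubst s v)
  | fLt u v => fLt (tsubst s u) (tsubst s v)
  | fBot => fBot
  | fNot q => fNot (fsubst s q)
  | fAnd q r => fAnd (fsubst s q) (fsubst s r)
  | fOr q r => fOr (fsubst s q) (fsubst s r)
  | fImp q r => fImp (fsubst s q) (fsubst s r)
  | fBAll t q => fBAll (tsubst s t) (fsubst (up s) q)
  | fBEx t q => fBEx (tsubst s t) (fsubst (up s) q)
  | fAll q => fAll (fsubst (up s) q)
  | fEx q => fEx (fsubst (up s) q)
  end.

Definition fren (r : nat -> nat) (p : formula) : formula := fsubst (fun i => tVar (r i)) p.

Definition swap01 (i : nat) : nat :=
  match i with 0 => 1 | 1 => 0 | _ => i end.

Definition skip2 (i : nat) : nat :=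
  match i with 0 => 0 | 1 => 1 | S (S j) => S (S (S j)) end.

Lemma eval_tsubst (M : structure) g s t :
  eval M g (tsubst s t) = eval M (fun i => eval M g (s i)) t.
Proof. induction t; simpl; congruence. Qed.

Lemma eval_lift (M : structure) g x t : eval M (scons x g) (lift t) = eval M g t.
Proof. apply eval_tsubst. Qed.

Lemma eval_up (M : structure) (g : nat -> M) x s :
  (fun i => eval M (scons x g) (up s i)) = scons x (fun i => eval M g (s i)).
Proof. extensionality i; destruct i; [reflexivity | apply eval_lift]. Qed.

Lemma sat_fsubst (M : structure) p : forall s g,
  sat M g (fsubst s p) <-> sat M (fun i => eval M g (s i)) p.
Proof.
  induction p; intros s g; simpl; rewrite ?eval_tsubst;
    try setoid_rewrite IHp; try setoid_rewrite IHp1; try setoid_rewrite IHp2;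
    try setoid_rewrite eval_up; reflexivity.
Qed.

Lemma sat_fsubst_ext {M : structure} {g} h {s p} :
  (forall i, eval M g (s i) = h i) -> sat M g (fsubst s p) <-> sat M h p.
Proof.
  intros E; rewrite sat_fsubst.
  replace (fun i => eval M g (s i)) with h; [reflexivity | extensionality i; auto].
Qed.

Lemma sat_swap01 {M : structure} {g : nat -> M} {x y p} :
  sat M (scons x (scons y g)) (fren swap01 p) <-> sat M (scons y (scons x g)) p.
Proof. apply sat_fsubst_ext; now intros [|[|i]]. Qed.

Lemma sat_skip2 {M : structure} {g : nat -> M} {x y z p} :
  sat M (scons x (scons y (scons z g))) (fren skip2 p) <-> sat M (scons x (scons y g)) p.
Proof. apply sat_fsubst_ext; now intros [|[|i]]. Qed.

Lemma Delta0_fsubst p s : Delta0 p -> Delta0 (fsubst s p).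
Proof. revert s; induction p; simpl; intuition. Qed.

Lemma hierarchy_fsubst :
  (forall k p, IsSigma k p -> forall s, IsSigma k (fsubst s p)) /\
  (forall k p, IsPi k p -> forall s, IsPi k (fsubst s p)).
Proof.
  apply hierarchy_ind; intros; simpl; constructor; solve [auto using Delta0_fsubst].
Qed.

Fixpoint neg (p : formula) : formula :=
  match p with
  | fEx q => fAll (neg q)
  | fAll q => fEx (neg q)
  | _ => fNot p
  end.

Lemma sat_neg {M : structure} p : forall g, sat M g (neg p) <-> ~ sat M g p.
Proof.
  induction p; intros g; simpl; try reflexivity; setoid_rewrite IHp.
  - split; [firstorder | apply not_all_ex_not].
  - firstorder.
Qed.

Lemma Delta0_neg p : Delta0 p -> Delta0 (neg p).
Proof. now destruct p. Qed.

Lemma hierarchy_neg :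
  (forall k p, IsSigma k p -> IsPi k (neg p)) /\
  (forall k p, IsPi k p -> IsSigma k (neg p)).
Proof. apply hierarchy_ind; intros; constructor; solve [auto using Delta0_neg]. Qed.

Inductive ExBlock (k : nat) : nat -> formula -> Prop :=
| ExBlock_Pi p : IsPi k p -> ExBlock k 0 p
| ExBlock_ex m p : ExBlock k m p -> ExBlock k (S m) (fEx p).

Lemma IsSigma_S_ExBlock k p : IsSigma (S k) p <-> exists m, ExBlock k m p.
Proof.
  split.
  - intros H; remember (S k) as k' eqn:Ek; induction H as [|k0 p Hp|k0 p _ IH].
    + discriminate.
    + injection Ek as ->; exists 0; now constructor.
    + destruct (IH Ek) as [m Hm]; exists (S m); now constructor.
  - intros [m H]; induction H; now constructor.
Qed.

Lemma ExBlock_fsubst k m p s : ExBlock k m p -> ExBlock k m (fsubst s p).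
Proof.
  intros H; revert s; induction H; intros s; constructor; auto.
  now apply hierarchy_fsubst.
Qed.

Section BoundedQuantifiers.
Variable K : structure.

Definition bforall (a : K) (Q : K -> Prop) : Prop := forall y, lt K y a -> Q y.
Definition bexists (a : K) (Q : K -> Prop) : Prop := exists y, lt K y a /\ Q y.

Definition closed_under (bq : K -> (K -> Prop) -> Prop) (P : formula -> Prop) : Prop :=
  forall q t, P q -> exists q', P q' /\
    forall g, sat K g q' <-> bq (eval K g t) (fun y => sat K (scons y g) q).

Definition collection (k : nat) : Prop :=
  forall (p : formula) (e : nat -> K) (a : K), IsSigma k p ->
    (forall x : K, lt K x a -> exists y : K, sat K (scons y (scons x e)) p) ->
    exists b : K, forall x : K, lt K x a ->
      exists y : K, lt K y b /\ sat K (scons y (scons x e)) p.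

Lemma collection_pred k : collection (S k) -> collection k.
Proof. intros Hcoll p e a Hp; apply Hcoll, hierarchy_succ, Hp. Qed.

Lemma bforall_closed_Sigma0 : closed_under bforall (IsSigma 0).
Proof.
  intros q t Hq; exists (fBAll t q); split; [|reflexivity].
  apply Sigma0; exact (IsSigma0_Delta0 Hq).
Qed.

Lemma bexists_closed_Sigma0 : closed_under bexists (IsSigma 0).
Proof.
  intros q t Hq; exists (fBEx t q); split; [|reflexivity].
  apply Sigma0; exact (IsSigma0_Delta0 Hq).
Qed.

Lemma bforall_closed_dual {P Q : formula -> Prop} :
  (forall q, P q -> Q (neg q)) -> (forall q, Q q -> P (neg q)) ->
  closed_under bexists Q -> closed_under bforall P.
Proof.
  intros neg_PQ neg_QP HQ q t Hq; destruct (HQ (neg q) t (neg_PQ q Hq)) as [r [Hr E]].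
  exists (neg r); split; [eauto|]; intros g.
  rewrite sat_neg, E; unfold bexists, bforall; setoid_rewrite sat_neg.
  split; [intros H y Hy; apply NNPP; eauto | intros H [y [Hy Hn]]; auto].
Qed.

Lemma bexists_closed_dual {P Q : formula -> Prop} :
  (forall q, P q -> Q (neg q)) -> (forall q, Q q -> P (neg q)) ->
  closed_under bforall Q -> closed_under bexists P.
Proof.
  intros neg_PQ neg_QP HQ q t Hq; destruct (HQ (neg q) t (neg_PQ q Hq)) as [r [Hr E]].
  exists (neg r); split; [eauto|]; intros g.
  rewrite sat_neg, E; unfold bexists, bforall; setoid_rewrite sat_neg.
  split; [intros H; apply NNPP; firstorder | firstorder].
Qed.

Lemma closed_under_blocks {bq P} {B : nat -> formula -> Prop} :
  (forall p, P p <-> exists m, B m p) -> (forall m, closed_under bq (B m)) ->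
  closed_under bq P.
Proof.
  intros EP HB q t Hq; apply EP in Hq as [m Hm].
  destruct (HB m q t Hm) as [q' [Hq' E]].
  exists q'; split; [apply EP; eauto | exact E].
Qed.

Lemma bexists_closed_ExBlock k :
  closed_under bexists (IsPi k) -> forall m, closed_under bexists (ExBlock k m).
Proof.
  intros HPi m; induction m as [|m IH]; intros q t Hq; inversion Hq as [q0 Hq0|m0 p Hp]; subst.
  - destruct (HPi q t Hq0) as [q' [Hq' E]]; exists q'; split; [now constructor | exact E].
  - destruct (IH (fren swap01 p) (lift t) (ExBlock_fsubst _ Hp)) as [p' [Hp' E]].
    exists (fEx p'); split; [now constructor|]; intros g; simpl.
    setoid_rewrite E; unfold bexists; setoid_rewrite eval_lift.
    setoid_rewrite sat_swap01; firstorder.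
Qed.

(* Collection bounds the leading existential uniformly in the bounded
   universal, which then moves inside past a bounded existential.  The result
   of absorbing that bounded existential is not a subformula, hence the
   induction on the length [m] of the existential block. *)
Lemma bforall_closed_ExBlock k :
  collection (S k) -> (forall m, closed_under bexists (ExBlock k m)) ->
  closed_under bforall (IsPi k) -> forall m, closed_under bforall (ExBlock k m).
Proof.
  intros Hcoll Hex HPi m; induction m as [|m IH]; intros q t Hq;
    inversion Hq as [q0 Hq0|m0 p Hp]; subst.
  - destruct (HPi q t Hq0) as [q' [Hq' E]]; exists q'; split; [now constructor | exact E].
  - destruct (Hex m (fren skip2 p) (tVar 1) (ExBlock_fsubst _ Hp)) as [p1 [Hp1 E1]].
    destruct (IH p1 (lift t) Hp1) as [p2 [Hp2 E2]].
    exists (fEx p2); split; [now constructor|]; intros g; simpl.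
    setoid_rewrite E2; unfold bforall; setoid_rewrite eval_lift.
    setoid_rewrite E1; unfold bexists; simpl; setoid_rewrite sat_skip2; split.
    + intros [b Hb] y Hy; destruct (Hb y Hy) as [z [_ Hz]]; eauto.
    + intros Hall; apply Hcoll in Hall as [b Hb]; [eauto|].
      apply IsSigma_S_ExBlock; eauto.
Qed.

Theorem Sigma_closed_bounded k :
  collection k -> closed_under bforall (IsSigma k) /\ closed_under bexists (IsSigma k).
Proof.
  induction k as [|k IH]; intros Hcoll.
  - split; [exact bforall_closed_Sigma0 | exact bexists_closed_Sigma0].
  - destruct (IH (collection_pred Hcoll)) as [Hall Hex].
    destruct hierarchy_neg as [neg_Sigma neg_Pi].
    assert (HexPi := bexists_closed_dual (neg_Pi k) (neg_Sigma k) Hall).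
    assert (HallPi := bforall_closed_dual (neg_Pi k) (neg_Sigma k) Hex).
    assert (HexB := bexists_closed_ExBlock HexPi).
    split; apply (closed_under_blocks (IsSigma_S_ExBlock k)); auto.
    now apply bforall_closed_ExBlock.
Qed.
End BoundedQuantifiers.

Section PAminusFacts.
Variable M : structure.
Hypothesis PA : PAminus M.

Lemma PAminus_lt_irrefl {x} : ~ lt M x x.
Proof. destruct PA as (_ & _ & _ & _ & _ & _ & _ & _ & H & _); apply H. Qed.

Lemma PAminus_lt_trans {x y z} : lt M x y -> lt M y z -> lt M x z.
Proof. destruct PA as (_ & _ & _ & _ & _ & _ & _ & _ & _ & H & _); apply H. Qed.

Lemma PAminus_lt_diff {x y} : lt M x y -> exists w, add M x w = y.
Proof.
  destruct PA as (_ & _ & _ & _ & _ & _ & _ & _ & _ & _ & _ & _ & _ & H & _); apply H.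
Qed.

Lemma PAminus_lt_succ_add b d : lt M b (add M (add M b (one M)) d).
Proof.
  destruct PA as (addC & _ & _ & _ & _ & add0 & _ & _ & _ & ltT & _ & lt_add & _ & _
                  & lt01 & _ & nonneg).
  assert (lt_addr : forall x w, lt M (zero M) w -> lt M x (add M x w)).
  { intros x w Hw; specialize (lt_add _ _ x Hw).
    now rewrite addC, add0, (addC w) in lt_add. }
  destruct (nonneg d) as [<- | Hd].
  - rewrite add0; exact (lt_addr b _ lt01).
  - exact (ltT _ _ _ (lt_addr b _ lt01) (lt_addr _ _ Hd)).
Qed.
End PAminusFacts.

Definition image_env {M K : structure} (f : M -> K) (g : nat -> M) : nat -> K :=
  fun i => f (g i).

Lemma image_env_scons {M K : structure} (f : M -> K) x g :
  image_env f (scons x g) = scons (f x) (image_env f g).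
Proof. extensionality i; now destruct i. Qed.

Section Extension.
Variables (M K : structure) (f : M -> K).

Lemma sigma_elementary_up {k p g} :
  sigma_elementary k f -> IsSigma k p -> sat M g p -> sat K (image_env f g) p.
Proof. intros Hf Hp; apply Hf, Hp. Qed.

Lemma sigma_elementary_Pi {k p g} :
  sigma_elementary k f -> IsPi k p -> sat M g p -> sat K (image_env f g) p.
Proof.
  intros Hf Hp HM; apply NNPP; rewrite <- sat_neg; intros HK.
  apply (Hf _ _ (proj2 hierarchy_neg _ _ Hp)), sat_neg in HK; auto.
Qed.

Hypothesis f_emb : is_embedding f.
Hypothesis f_end : end_extension f.

Lemma f_lt {x y} : lt M x y <-> lt K (f x) (f y).
Proof. apply f_emb. Qed.

Lemma f_succ x : f (add M x (one M)) = add K (f x) (one K).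
Proof. destruct f_emb as (_ & _ & f1 & fadd & _); now rewrite fadd, f1. Qed.

Lemma lt_image_in_image {y a} : PAminus K -> lt K y (f a) -> in_image f y.
Proof.
  intros PA Hy; apply NNPP; intros Hout.
  exact (PAminus_lt_irrefl PA (PAminus_lt_trans PA (f_end Hout a) Hy)).
Qed.

(* A property holding from [b] on in [M] is the [Pi_{j+1}] statement
   [forall d, theta (b + 1 + d)], which goes up to [K] and there reaches
   every [c] above [M]. *)
Lemma tail_transfer {j theta g} b {c} :
  PAminus M -> PAminus K -> sigma_elementary (S j) f -> IsSigma j theta ->
  (forall x, lt M b x -> sat M (scons x g) theta) -> ~ in_image f c ->
  sat K (scons c (image_env f g)) theta.
Proof.
  intros PA_M PA_K Hf Htheta Hb Hc.
  pose (s := scons (tPlus (tPlus (tVar 1) tOne) (tVar 0)) (fun i => tVar (S (S i)))).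
  assert (HM : sat M (scons b g) (fAll (fsubst s theta))).
  { intros d; rewrite (sat_fsubst_ext (scons (add M (add M b (one M)) d) g));
      [|now intros []].
    apply Hb, PAminus_lt_succ_add, PA_M. }
  apply (sigma_elementary_Pi Hf) in HM;
    [|now apply PiS_All, PiS_Sigma, hierarchy_fsubst].
  destruct (PAminus_lt_diff PA_K (f_end Hc (add M b (one M)))) as [d Hd].
  specialize (HM d); rewrite image_env_scons in HM.
  rewrite (sat_fsubst_ext (scons c (image_env f g))) in HM; [exact HM|].
  intros []; [simpl; now rewrite <- f_succ | reflexivity].
Qed.

Lemma exists_bforall_reflect {j theta g a} :
  sigma_elementary (S j) f -> collection K j -> IsSigma j theta ->
  (exists c, forall y, lt K y (f a) -> sat K (scons y (scons c (image_env f g))) theta) ->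
  exists x, forall y, lt K y (f a) -> sat K (scons y (scons (f x) (image_env f g))) theta.
Proof.
  intros Hf Hcoll Htheta [c Hc].
  destruct (proj1 (Sigma_closed_bounded Hcoll) (fren skip2 theta) (tVar 1))
    as [sigma [Hsigma E]]; [now apply hierarchy_fsubst|].
  assert (Hsigma' : IsSigma (S j) sigma) by now apply hierarchy_succ.
  assert (HK : sat K (image_env f (scons a g)) (fEx sigma)).
  { exists c; rewrite image_env_scons, E; intros y Hy; apply sat_skip2, Hc, Hy. }
  apply Hf in HK as [x Hx]; [|now apply SigmaS_Ex].
  apply (sigma_elementary_up Hf Hsigma') in Hx.
  exists x; intros y Hy.
  rewrite !image_env_scons, E in Hx; exact (proj1 sat_skip2 (Hx y Hy)).
Qed.
End Extension.

Theorem proposition1p3 (n : nat) (M K : structure) (f : M -> K) :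
  IDelta0 M ->
  is_embedding f -> end_extension f -> proper_extension f ->
  sigma_elementary (n + 2) f ->
  BSigma (n + 1) K ->
  forall (phi : formula) (e : nat -> M) (a : M),
    IsPi (n + 1) phi ->
    ((forall x : M, exists y : M, lt M y a /\ sat M (scons y (scons x e)) phi) ->
     exists y : M, lt M y a /\
       forall b : M, exists x : M, lt M b x /\ sat M (scons y (scons x e)) phi).
Proof.
  rewrite !(Nat.add_comm n); cbn [Nat.add].
  intros [PA_M _] f_emb f_end [c Hc] Hf [[PA_K _] Hcoll] phi e a Hphi Hall.
  assert (Hnphi : IsSigma (S n) (neg phi)) by now apply hierarchy_neg.
  apply NNPP; intros Hno.
  assert (Hbound : forall y, lt M y a -> exists b, forall x, lt M b x ->
            sat M (scons x (scons y e)) (fren swap01 (neg phi))).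
  { intros y Hy; apply NNPP; intros Hy'; apply Hno; exists y; split; [exact Hy|].
    intros b; apply NNPP; intros Hb; apply Hy'; exists b; intros x Hx.
    rewrite sat_swap01, sat_neg; intros Hxy; apply Hb; eauto. }
  assert (Hc' : forall y, lt K y (f a) -> sat K (scons y (scons c (image_env f e))) (neg phi)).
  { intros y Hy; destruct (lt_image_in_image f_end PA_K Hy) as [y' <-].
    destruct (Hbound y') as [b Hb]; [now apply (f_lt f_emb)|].
    rewrite <- sat_swap01, <- image_env_scons.
    apply (tail_transfer f_emb f_end b (j := S n)); auto.
    now apply hierarchy_fsubst. }
  destruct (exists_bforall_reflect Hf Hcoll Hnphi (ex_intro _ c Hc')) as [x Hx].
  destruct (Hall x) as [y [Hy Hxy]].
  apply (sigma_elementary_up Hf (SigmaS_Pi Hphi)) in Hxy.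
  rewrite !image_env_scons in Hxy.
  specialize (Hx (f y) (proj1 (f_lt f_emb) Hy)).
  now apply sat_neg in Hx.
Qed.
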